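(* Let $\mathcal L$ be an algebraic system, $\mathbf{STop}\mathcal{L}$ the category of semitopological $\mathcal L$-structures, and $\mathcal C$ an epireflective subcategory of $\mathbf{Top}$. Then $\mathrm{r}_{\mathcal C}(\mathbf{STop}\mathcal{L})\subseteq\mathbf{STop}\mathcal{L}$: for each $(\mathfrak U,X)\in\mathbf{STop}\mathcal{L}$, where $X$ is the domain of $\mathfrak U$, the space $\mathrm{r}_{\mathcal C}X$ is the domain of an $\mathcal L$-structure $\mathfrak V$ with $(\mathfrak V,\mathrm{r}_{\mathcal C}X)\in\mathbf{STop}\mathcal{L}$. Furthermore, the reflection arrow $\mathrm{r}_{(X,\mathcal C)}\colon X\to\mathrm{r}_{\mathcal C}X$ is an $\mathcal L$-homomorphism in $\mathbf{STop}\mathcal{L}$.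
   Context: An epireflective subcategory $\mathcal C$ of $\mathbf{Top}$ is a full, isomorphism-closed subcategory closed under products and subspaces; each space $X$ has a reflection $\mathrm{r}_{\mathcal C}X\in\mathcal C$ with a continuous surjection $\mathrm{r}_{(X,\mathcal C)}\colon X\to \mathrm{r}_{\mathcal C}X$ through which every continuous map from $X$ into a space of $\mathcal C$ factors uniquely. An algebraic system $\mathcal L$ consists of constant symbols, function symbols of finite arity $\ge1$ and a set of equations; an $\mathcal L$-structure is a set with interpretations of the constants and operations satisfying the equations; a semitopological $\mathcal L$-structure is one on a topological space in which all operations are separately continuous (continuous in each variable with the others fixed); $\mathcal L$-homomorphisms are continuous maps preserving constants and operations. *)

From HB Require Import structures.
From mathcomp Require Import all_boot all_order all_algebra.
From mathcomp Require Import all_classical all_reals all_analysis.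

Set Implicit Arguments.
Unset Strict Implicit.
Unset Printing Implicit Defensive.

Local Open Scope classical_set_scope.

Inductive term (K F : Type) (ar : F -> nat) : Type :=
  | tVar : nat -> term K ar
  | tConst : K -> term K ar
  | tApp : forall f : F, ('I_(ar f) -> term K ar) -> term K ar.

Record alg_system := AlgSystem {
  const_sym : Type;
  fun_sym : Type;
  arity : fun_sym -> nat;
  arity_pos : forall f, (0 < arity f)%N;
  eqn_idx : Type;
  eqn_lhs : eqn_idx -> term const_sym arity;
  eqn_rhs : eqn_idx -> term const_sym arity
}.

Record L_ops (L : alg_system) (A : Type) := LOps {
  op_const : const_sym L -> A;
  op_fun : forall f : fun_sym L, ('I_(arity f) -> A) -> A
}.
Arguments op_fun {L A} _ f _.
Arguments op_const {L A} _ _.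
Arguments tApp {K F ar} f _.

Fixpoint term_eval (L : alg_system) (A : Type) (I : L_ops L A)
    (v : nat -> A) (t : term (const_sym L) (@arity L)) : A :=
  match t with
  | tVar n => v n
  | tConst c => op_const I c
  | tApp f args => op_fun I f (fun j => term_eval I v (args j))
  end.

Definition is_L_structure (L : alg_system) (A : Type) (I : L_ops L A) : Prop :=
  forall (e : eqn_idx L) (v : nat -> A),
    term_eval I v (eqn_lhs e) = term_eval I v (eqn_rhs e).

Definition upd (n : nat) (A : Type) (a : 'I_n -> A) (i : 'I_n) (x : A) :
  'I_n -> A := fun j => if j == i then x else a j.

Definition semitop_L_structure (L : alg_system) (X : topologicalType)
    (I : L_ops L X) : Prop :=
  is_L_structure I /\
  forall (f : fun_sym L) (i : 'I_(arity f)) (a : 'I_(arity f) -> X),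
    continuous (fun x : X => op_fun I f (upd a i x)).

Definition L_hom (L : alg_system) (X Y : topologicalType)
    (I : L_ops L X) (J : L_ops L Y) (h : X -> Y) : Prop :=
  continuous h /\
  (forall c, h (op_const I c) = op_const J c) /\
  (forall f (a : 'I_(arity f) -> X), h (op_fun I f a) = op_fun J f (h \o a)).

Definition homeomorphic (X Y : topologicalType) : Prop :=
  exists (f : X -> Y) (g : Y -> X),
    [/\ continuous f, continuous g, cancel f g & cancel g f].

(** A full subcategory is given by a class [C] of spaces; it is
    epireflective when it is isomorphism-closed and closed under
    (arbitrary) products and subspaces. *)
Definition epireflective (C : topologicalType -> Prop) : Prop :=
  [/\ (forall X Y : topologicalType, C X -> homeomorphic X Y -> C Y),
      (forall (I : Type) (T : I -> topologicalType),
          (forall i, C (T i)) -> C (prod_topology T))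
    & (forall (X : topologicalType) (A : set X), C X -> C (set_type A))].

Definition is_reflection (C : topologicalType -> Prop)
    (X Y : topologicalType) (r : X -> Y) : Prop :=
  [/\ C Y, continuous r, (forall y : Y, exists x : X, r x = y)
    & forall (Z : topologicalType), C Z -> forall g : X -> Z, continuous g ->
        exists h : Y -> Z, [/\ continuous h, g = h \o r &
          forall h' : Y -> Z, continuous h' -> g = h' \o r -> h' = h]].

(** The equations of [L] and the separate continuity of its operations only
    need the operations of [U] to pass to the quotient [r : X -> rX].  Since
    [rX] lies in [C], every continuous map [X -> rX] factors through [r]; in
    particular so does [x |-> r (f (.., x, ..))], so [r (f a)] depends on each
    [r (a j)] separately, hence (changing one coordinate at a time) on [r \o a]
    jointly.  Transporting the operations along a section of [r] then gives a
    structure on [rX] for which [r] is a homomorphism, and the factorising maps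
    are exactly its partial operations, hence continuous. *)

From HB Require Import structures.
From mathcomp Require Import all_boot all_order all_algebra.
From mathcomp Require Import all_classical all_reals all_analysis.

Set Implicit Arguments.
Unset Strict Implicit.
Unset Printing Implicit Defensive.

Section Update.
Variables (n : nat) (A : Type).

Lemma upd_id (a : 'I_n -> A) (i : 'I_n) : upd a i (a i) = a.
Proof. by apply: funext => j; rewrite /upd; case: eqVneq => [->|]. Qed.

Lemma comp_upd (B : Type) (g : A -> B) (a : 'I_n -> A) (i : 'I_n) (x : A) :
  g \o upd a i x = upd (g \o a) i (g x).
Proof. by apply: funext => j; rewrite /upd /=; case: (j == i). Qed.

Definition splice (a a' : 'I_n -> A) (k : nat) : 'I_n -> A :=
  fun j => if (j < k)%N then a' j else a j.

Lemma splice0 (a a' : 'I_n -> A) : splice a a' 0 = a.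
Proof. by apply: funext => j; rewrite /splice ltn0. Qed.

Lemma splice_all (a a' : 'I_n -> A) : splice a a' n = a'.
Proof. by apply: funext => j; rewrite /splice ltn_ord. Qed.

Lemma spliceS (a a' : 'I_n -> A) (i : 'I_n) :
  splice a a' i.+1 = upd (splice a a' i) i (a' i).
Proof.
apply: funext => j; rewrite /splice /upd ltnS leq_eqVlt.
case: (eqVneq j i) => [->|neq_ji]; first by rewrite !eqxx.
by have /negbTE-> : j != i :> nat := neq_ji.
Qed.

Lemma splice_at (a a' : 'I_n -> A) (i : 'I_n) : splice a a' i i = a i.
Proof. by rewrite /splice ltnn. Qed.

Lemma separate_congr_joint (B : Type) (R : A -> A -> Prop) (F : ('I_n -> A) -> B) :
  (forall a i x x', R x x' -> F (upd a i x) = F (upd a i x')) ->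
  forall a a', (forall j, R (a j) (a' j)) -> F a = F a'.
Proof.
move=> Fsep a a' Raa'.
suff splice_eq k : (k <= n)%N -> F (splice a a' k) = F a.
  by rewrite -(splice_all a a') splice_eq.
elim: k => [|k IHk] lt_kn; first by rewrite splice0.
have {IHk}<- := IHk (ltnW lt_kn).
have [i ->] : exists i : 'I_n, k = i by exists (Ordinal lt_kn).
rewrite spliceS -{2}[splice a a' i](upd_id _ i) splice_at.
by symmetry; apply: Fsep.
Qed.

End Update.

Section QuotientStructure.
Variables (L : alg_system) (A B : Type) (I : L_ops L A).
Variables (p : A -> B) (s : B -> A).
Hypothesis sK : cancel s p.
Hypothesis op_compat : forall f (a a' : 'I_(arity f) -> A),
  (forall j, p (a j) = p (a' j)) -> p (op_fun I f a) = p (op_fun I f a').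

Definition quotient_ops : L_ops L B :=
  LOps (fun c => p (op_const I c)) (fun f b => p (op_fun I f (s \o b))).

Lemma quotient_opsE f (a : 'I_(arity f) -> A) :
  p (op_fun I f a) = op_fun quotient_ops f (p \o a).
Proof. by apply: op_compat => j /=; rewrite sK. Qed.

Lemma quotient_term_eval (v : nat -> A) (t : term (const_sym L) (@arity L)) :
  p (term_eval I v t) = term_eval quotient_ops (p \o v) t.
Proof.
elim: t => [k|c|f args IH] //=.
by rewrite quotient_opsE; congr (op_fun _ f _); apply: funext => j; apply: IH.
Qed.

Lemma quotient_L_structure : is_L_structure I -> is_L_structure quotient_ops.
Proof.
move=> IL e v; have -> : v = p \o (s \o v) by apply: funext => y /=; rewrite sK.
by rewrite -!quotient_term_eval IL.
Qed.

End QuotientStructure.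

Section Reflection.
Variables (C : topologicalType -> Prop) (X rX : topologicalType) (r : X -> rX).
Hypothesis r_refl : is_reflection C r.

Lemma reflection_factor (g : X -> rX) : continuous g ->
  exists2 h : rX -> rX, continuous h & g = h \o r.
Proof.
case: r_refl => CrX _ _ r_univ g_cont.
by have [h [h_cont gE _]] := r_univ rX CrX g g_cont; exists h.
Qed.

Variables (L : alg_system) (U : L_ops L X).
Hypothesis U_semitop : semitop_L_structure U.

Lemma reflection_partial_op f (a : 'I_(arity f) -> X) (i : 'I_(arity f)) :
  exists2 h : rX -> rX, continuous h &
    forall x, r (op_fun U f (upd a i x)) = h (r x).
Proof.
case: r_refl U_semitop => _ r_cont _ _ [_ U_sep].
have op_cont : continuous (r \o (fun x => op_fun U f (upd a i x))).
  by move=> x; apply: continuous_comp; [apply: U_sep | apply: r_cont].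
have [h h_cont opE] := reflection_factor op_cont.
by exists h => // x; rewrite -[RHS]/((h \o r) x) -opE.
Qed.

Lemma reflection_op_congr f (a a' : 'I_(arity f) -> X) :
  (forall j, r (a j) = r (a' j)) -> r (op_fun U f a) = r (op_fun U f a').
Proof.
apply: (separate_congr_joint (R := fun x x' => r x = r x') (F := r \o op_fun U f)).
move=> b i x x' rxx'; have [h _ opE] := reflection_partial_op b i.
by rewrite /= !opE rxx'.
Qed.

Lemma reflection_section : exists s : rX -> X, cancel s r.
Proof. by case: r_refl => _ _ r_surj _; have [s sK] := choice r_surj; exists s. Qed.

Variable s : rX -> X.
Hypothesis sK : cancel s r.

Lemma reflection_quotient_semitop : semitop_L_structure (quotient_ops U r s).
Proof.
split; first exact: (quotient_L_structure sK reflection_op_congr U_semitop.1).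
move=> f i b; have [h h_cont opE] := reflection_partial_op (s \o b) i.
suff -> : (fun y => op_fun (quotient_ops U r s) f (upd b i y)) = h by [].
by apply: funext => y /=; rewrite comp_upd opE sK.
Qed.

Lemma reflection_L_hom : L_hom U (quotient_ops U r s) r.
Proof.
case: r_refl => _ r_cont _ _; split=> //; split=> // f a.
exact: (quotient_opsE sK reflection_op_congr).
Qed.

End Reflection.

Theorem proposition3p9 (L : alg_system) (C : topologicalType -> Prop)
  (hC : epireflective C) (X : topologicalType) (U : L_ops L X)
  (hU : semitop_L_structure U) (rX : topologicalType) (r : X -> rX)
  (hr : is_reflection C r) :
  exists V : L_ops L rX, semitop_L_structure V /\ L_hom U V r.
Proof.
have [s sK] := reflection_section hr.
exists (quotient_ops U r s); split.
- exact (reflection_quotient_semitop hr hU sK).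
- exact (reflection_L_hom hr hU sK).
Qed.
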